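(* Let $R$ be a regular ring with unity, and let $e,f$ be idempotents of $R$. Then $f(1-e)=f$ if and only if $M(f,e)=\{0\}$.
   Context: A ring is regular if for every $x$ there is $y$ with $xyx=x$. For idempotents $a,b$ of $R$, $M(a,b)=\{g \text{ idempotent in } R: ga=g \text{ and } bg=g\}$. (The condition $f(1-e)=f$ is the relation $f\,\omega^l\,(1-e)$.) *)

From mathcomp Require Import all_boot all_algebra.
Set Implicit Arguments. Unset Strict Implicit. Unset Printing Implicit Defensive.
Import GRing.Theory.
Local Open Scope ring_scope.

Definition regular_ring (R : pzRingType) : Prop :=
  forall x : R, exists y : R, x * y * x = x.

Definition idem_elt (R : pzRingType) (x : R) : Prop := x * x = x.

Definition Mset (R : pzRingType) (a b : R) : R -> Prop :=
  fun g => idem_elt g /\ g * a = g /\ b * g = g.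

From mathcomp Require Import all_boot all_algebra.
Set Implicit Arguments. Unset Strict Implicit. Unset Printing Implicit Defensive.
Local Open Scope ring_scope.
Import GRing.Theory.

(* f(1 - e) = f means f e = 0.  If f e = 0, every g in M(f,e) satisfies
   g = g g = (g f)(e g) = g (f e) g = 0.  Conversely, regularity gives a
   reflexive inverse z of f e, and e z f is an idempotent of M(f,e); if that
   set is {0} then f e = (f e) z (f e) = f (e z f) e = 0. *)

Lemma mulr_subr1_idP (R : pzRingType) (x y : R) :
  x * (1 - y) = x <-> x * y = 0.
Proof.
rewrite mulrBr mulr1; split=> [xy | ->]; last by rewrite subr0.
by move/eqP: xy; rewrite subr_eq addrC -subr_eq subrr eq_sym => /eqP.
Qed.

Lemma regular_reflexive_inverse (R : pzRingType) (x : R) :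
  regular_ring R -> exists2 z : R, x * z * x = x & z * x * z = z.
Proof.
move=> reg; have [y xyx] := reg x.
exists (y * x * y).
  by rewrite !mulrA !xyx.
have -> : y * x * y * x * (y * x * y) = y * (x * y * x) * (y * x * y).
  by rewrite !mulrA.
by rewrite xyx !mulrA -(mulrA y x y) -(mulrA y (x * y) x) xyx mulrA.
Qed.

Section Mset.

Variable R : pzRingType.
Implicit Types a b e f g z : R.

Lemma Mset0 a b : Mset a b 0.
Proof. by rewrite /Mset /idem_elt !(mulr0, mul0r). Qed.

Lemma Mset_eq0 a b g : a * b = 0 -> Mset a b g -> g = 0.
Proof.
move=> ab0 [gg [ga bg]].
have -> : g = g * a * (b * g) by rewrite ga bg gg.
by rewrite mulrA -(mulrA g a b) ab0 mulr0 mul0r.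
Qed.

Lemma Mset_reflexive_inverse e f z :
  idem_elt e -> idem_elt f -> z * (f * e) * z = z -> Mset f e (e * z * f).
Proof.
rewrite /Mset /idem_elt => ee ff zfez; split; last split.
- by rewrite -{3}zfez !mulrA.
- by rewrite -mulrA ff.
- by rewrite !mulrA ee.
Qed.

End Mset.

Theorem corollary2p3 (R : pzRingType) (e f : R) :
  regular_ring R -> idem_elt e -> idem_elt f ->
  (f * (1 - e) = f <-> (forall g : R, Mset f e g <-> g = 0)).
Proof.
move=> reg ee ff; split=> [/mulr_subr1_idP fe0 g | M0].
  by split=> [/(Mset_eq0 fe0) | ->]; last exact: Mset0.
apply/mulr_subr1_idP.
have [z fezfe zfez] := regular_reflexive_inverse (f * e) reg.
have /M0 ezf0 := Mset_reflexive_inverse ee ff zfez.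
have -> : f * e = f * (e * z * f) * e by rewrite -{1}fezfe !mulrA.
by rewrite ezf0 mulr0 mul0r.
Qed.
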